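(* Let $\tau$ be a lozenge tiling of a triangular region $T=T_d(I)$ and let $\sigma$ be an $n$-cycle of lozenges in $\tau$. Then the twist $\tau'$ of $\sigma$ in $\tau$ satisfies $\operatorname{msgn}(\tau')=(-1)^{n-1}\operatorname{msgn}(\tau)$.
   Context: $\mathcal T_d$ is an equilateral triangle of side length $d$ subdivided into unit triangles, upward ones labeled by degree $d-1$ monomials in $K[x,y,z]$, downward ones by degree $d-2$ monomials ($x^{d-1}$ top, $y^{d-1}$ bottom-left, $z^{d-1}$ bottom-right; an upward triangle sharing an edge with a downward one has label the downward label times a variable). For a monomial ideal $I$, $T_d(I)$ is the set of unit triangles whose labels are not in $I$. A lozenge is a union of two unit triangles sharing an edge; a lozenge tiling covers each unit triangle exactly once. Order monomials by graded reverse-lexicographic order; let $B_1,B_2,\dots$ be the downward and $W_1,W_2,\dots$ the upward triangles of $T$ in that order. A tiling $\tau$ determines the permutation $\pi$ with $B_i$ and $W_{\pi(i)}$ in a common lozenge, and $\operatorname{msgn}(\tau)=\operatorname{sgn}(\pi)$. An $n$-cycle of lozenges in $\tau$ is an ordered collection of distinct lozenges $\ell_1,\dots,\ell_n$ of $\tau$ such that the downward triangle of $\ell_i$ shares an edge with the upward triangle of $\ell_{i+1}$ for $1\le i<n$ and the downward triangle of $\ell_n$ shares an edge with the upward triangle of $\ell_1$. The twist of this cycle in $\tau$ is the tiling obtained by replacing $\ell_1,\dots,\ell_n$ by the lozenges formed by the downward triangle of $\ell_i$ and the upward triangle of $\ell_{i+1}$ ($1\le i<n$) and by the downward triangle of $\ell_n$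 and the upward triangle of $\ell_1$. *)

From mathcomp Require Import all_boot all_order all_algebra all_fingroup.
Set Implicit Arguments. Unset Strict Implicit. Unset Printing Implicit Defensive.

(* A monomial x^a y^b z^c of K[x,y,z] is represented by its exponent triple
   ((a, b), c).  The field K plays no role in the combinatorics. *)
Definition mono := (nat * nat * nat)%type.

Definition mx (m : mono) : nat := m.1.1.
Definition my (m : mono) : nat := m.1.2.
Definition mz (m : mono) : nat := m.2.

Definition mdeg (m : mono) : nat := mx m + my m + mz m.

Definition mdivides (m m' : mono) : bool :=
  [&& mx m <= mx m', my m <= my m' & mz m <= mz m'].

(* A monomial ideal, described by the set of monomials it contains:
   closed under multiplication by arbitrary monomials. *)
Definition monomial_ideal (I : pred mono) : Prop :=
  forall m m', I m -> mdivides m m' -> I m'.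

(* graded reverse lexicographic order with x > y > z:
   m >= m' iff deg m > deg m', or equal degrees and the last nonzero entry
   of m - m' is negative (or m = m'). *)
Definition grevlex_gt (m m' : mono) : bool :=
  (mdeg m > mdeg m') ||
  ((mdeg m == mdeg m') &&
   ((mz m < mz m') || ((mz m == mz m') && (my m < my m')))).
Definition grevlex_ge (m m' : mono) : bool := (m == m') || grevlex_gt m m'.

Definition small_monos (d : nat) : seq mono :=
  [seq (ab, c) | ab <- [seq (a, b) | a <- iota 0 d, b <- iota 0 d], c <- iota 0 d].

(* Downward triangles of T_d(I): labels of degree d-2 not in I, listed
   B_1, B_2, ... in (decreasing) grevlex order. *)
Definition downT (d : nat) (I : pred mono) : seq mono :=
  sort grevlex_ge [seq m <- small_monos d | (mdeg m + 2 == d) && ~~ I m].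

(* Upward triangles of T_d(I): labels of degree d-1 not in I, listed
   W_1, W_2, ... in (decreasing) grevlex order. *)
Definition upT (d : nat) (I : pred mono) : seq mono :=
  sort grevlex_ge [seq m <- small_monos d | (mdeg m + 1 == d) && ~~ I m].

(* A downward triangle with label b shares an edge with an upward triangle
   with label w iff w = b * x, b * y or b * z. *)
Definition madj (b w : mono) : bool :=
  [|| w == ((mx b).+1, my b, mz b),
      w == (mx b, (my b).+1, mz b) |
      w == (mx b, my b, (mz b).+1)].

(* A lozenge is a pair (downward label, upward label) of adjacent unit
   triangles; a tiling is a list of lozenges of T_d(I) covering each unit
   triangle of T_d(I) exactly once. *)
Definition is_tiling (d : nat) (I : pred mono) (tau : seq (mono * mono)) : bool :=
  [&& all (fun l => [&& l.1 \in downT d I, l.2 \in upT d I & madj l.1 l.2]) tau,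
      all (fun b => count (fun l => l.1 == b) tau == 1) (downT d I) &
      all (fun w => count (fun l => l.2 == w) tau == 1) (upT d I)].

Definition mono0 : mono := (0, 0, 0).

(* msgn tau = sgn(pi) where B_i and W_(pi i) lie in a common lozenge of tau.
   (For a non-tiling no such pi exists and the value 0 is a junk value.) *)
Definition msgn (d : nat) (I : pred mono) (tau : seq (mono * mono)) : int :=
  match [pick s : 'S_(size (downT d I)) |
           [forall i : 'I_(size (downT d I)), (nth mono0 (downT d I) i, nth mono0 (upT d I) (s i)) \in tau]]
  with
  | Some s => ((-1) ^+ odd_perm s)%R
  | None => 0%R
  end.

Definition is_cycle_in (tau sigma : seq (mono * mono)) : bool :=
  let n := size sigma in
  [&& uniq sigma, all (fun l => l \in tau) sigma &
      all (fun i => madj (nth (mono0, mono0) sigma i).1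
                         (nth (mono0, mono0) sigma (i.+1 %% n)).2) (iota 0 n)].

Definition twist (tau sigma : seq (mono * mono)) : seq (mono * mono) :=
  let n := size sigma in
  [seq l <- tau | l \notin sigma] ++
  [seq ((nth (mono0, mono0) sigma i).1, (nth (mono0, mono0) sigma (i.+1 %% n)).2)
  | i <- iota 0 n].

From mathcomp Require Import all_boot all_order all_algebra all_fingroup.
Set Implicit Arguments. Unset Strict Implicit. Unset Printing Implicit Defensive.

(* A tiling pairs the downward triangles B_i bijectively with the upward
   triangles W_(pi i), and msgn is the sign of pi.  Twisting a cycle of
   lozenges l_1, ..., l_n re-pairs the downward triangle of l_k with the
   upward triangle of l_(k+1), so the new permutation is pi composed with the
   n-cycle on the indices of these downward triangles, a product of n - 1
   transpositions. *)
Lemma map_uniq_inj_in (A B : eqType) (f : A -> B) (s : seq A) :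
  uniq (map f s) -> {in s &, injective f}.
Proof.
elim: s => //= x s IHs /andP[fx_notin uniq_fs] y z; rewrite !inE.
case/orP=> [/eqP->|ys] /orP[/eqP->|zs] // e.
- by move: fx_notin; rewrite e map_f.
- by move: fx_notin; rewrite -e map_f.
- exact: IHs.
Qed.

Lemma count1_perm_map (A B : eqType) (f : A -> B) (s : seq A) (r : seq B) :
  uniq r -> {in s, forall x, f x \in r} ->
  {in r, forall y, count (fun x => f x == y) s = 1} -> perm_eq (map f s) r.
Proof.
move=> uniq_r f_in count1.
have mem_fs y : (y \in map f s) = (y \in r).
  apply/mapP/idP => [[x xs ->]|yr]; first exact: f_in.
  have /hasP[x xs /eqP <-] : has (fun x => f x == y) s by rewrite has_count count1.
  by exists x.
apply: uniq_perm => //; apply: count_mem_uniq => y; rewrite count_map mem_fs.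
case: (boolP (y \in r)) => [/count1 //|yNr].
apply/eqP; rewrite -leqn0 leqNgt -has_count; apply/hasP => -[x xs /eqP fx].
by move: yNr; rewrite -fx f_in.
Qed.

Lemma next_nth_mod (T : eqType) (x0 : T) (s : seq T) k :
  uniq s -> k < size s -> next s (nth x0 s k) = nth x0 s (k.+1 %% size s).
Proof.
move=> uniq_s ks; rewrite next_nth mem_nth // index_uniq //.
case: s uniq_s ks => [|x s] //= _; rewrite ltnS leq_eqVlt => /orP[/eqP->|ks].
  by rewrite modnn nth_default.
by rewrite modn_small // (set_nth_default x0).
Qed.

Lemma tperm_next_cons (T : finType) (x y : T) (r : seq T) z :
  uniq [:: x, y & r] -> tperm x y (next [:: x, y & r] z) = next (y :: r) z.
Proof.
rewrite [uniq _]/= inE negb_or => /andP[/andP[xy xNr] /andP[yNr _]].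
have xNyr : x \notin y :: r by rewrite inE negb_or xy.
rewrite !next_nth; case: (z =P x) => [->|/eqP zx].
  by rewrite mem_head (negbTE xNyr) /= eqxx tpermR.
rewrite [z \in _]inE (negbTE zx) orFb.
have -> : index z [:: x, y & r] = (index z (y :: r)).+1 by rewrite /= eq_sym (negbTE zx).
case: ifP => [zyr|zNyr]; last first.
  by rewrite tpermD // eq_sym ?zx //; apply: contraFneq zNyr => <-; rewrite mem_head.
have := index_mem z (y :: r); rewrite zyr ltnS; move: (index z (y :: r)) => i.
rewrite leq_eqVlt => /orP[/eqP->|ir]; first by rewrite /= !nth_default ?tpermL.
rewrite /= (set_nth_default y) // tpermD //.
  by apply: contraNneq xNr => ->; rewrite mem_nth.
by apply: contraNneq yNr => ->; rewrite mem_nth.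
Qed.

Lemma odd_perm_next (T : finType) (p : seq T) (c : {perm T}) :
  uniq p -> c =1 next p -> odd_perm c = odd (size p).-1.
Proof.
elim: p c => [|x [|y r] IHp] c.
- by move=> _ c_id; rewrite (_ : c = 1%g) ?odd_perm1 //; apply/permP => z; rewrite perm1.
- move=> _ c_id; rewrite (_ : c = 1%g) ?odd_perm1 //; apply/permP => z.
  by rewrite perm1 c_id next_nth mem_seq1 nth_nil; case: eqP => [->|].
move=> uniq_p c_next; have [_ uniq_yr] := andP uniq_p.
have c'_next : (c * tperm x y)%g =1 next (y :: r).
  by move=> z; rewrite permM c_next tperm_next_cons.
have xy : x != y by move: uniq_p; rewrite /= inE negb_or => /andP[/andP[]].
rewrite -(mulgK (tperm x y) c) odd_permM (IHp _ uniq_yr c'_next) tpermV odd_tperm xy.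
by rewrite /= addbT.
Qed.

Section Matching.

Variables (T : eqType) (x0 : T) (D U : seq T).
Hypotheses (uniq_D : uniq D) (uniq_U : uniq U).

Definition matching (t : seq (T * T)) :=
  perm_eq (map fst t) D && perm_eq (map snd t) U.

Local Notation pairing s i := (nth x0 D i, nth x0 U (s i)).

Variable t : seq (T * T).
Hypothesis t_matching : matching t.

Lemma matching_size : size U = size D.
Proof.
by case/andP: t_matching => /perm_size <- /perm_size <-; rewrite !size_map.
Qed.

Lemma matching_fst_inj : {in t &, injective fst}.
Proof.
by apply: map_uniq_inj_in; case/andP: t_matching => /perm_uniq ->.
Qed.

Lemma matching_snd_inj : {in t &, injective snd}.
Proof.
by apply: map_uniq_inj_in; case/andP: t_matching => _ /perm_uniq ->.
Qed.

Lemma matching_uniq : uniq t.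
Proof.
by apply: (@map_uniq _ _ fst); case/andP: t_matching => /perm_uniq ->.
Qed.

Lemma matching_nth_inj (i j : 'I_(size D)) :
  nth x0 U i = nth x0 U j -> i = j.
Proof.
by move/eqP; rewrite nth_uniq ?matching_size // => /eqP /val_inj.
Qed.

Lemma matching_perm :
  exists s : 'S_(size D), forall i : 'I_(size D), pairing s i \in t.
Proof.
have /fin_all_exists[f f_t] :
    forall i : 'I_(size D), exists j : 'I_(size D), (nth x0 D i, nth x0 U j) \in t.
  move=> i; have : nth x0 D i \in map fst t.
    by case/andP: t_matching => /perm_mem ->; rewrite mem_nth.
  case/mapP=> l lt ->.
  have lU : l.2 \in U by case/andP: t_matching => _ /perm_mem <-; exact: map_f.
  have ltU : index l.2 U < size D by rewrite -matching_size index_mem.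
  by exists (Ordinal ltU); rewrite /= nth_index // -surjective_pairing.
have f_inj : injective f.
  move=> i j fij; have := matching_snd_inj (f_t i) (f_t j); rewrite /= fij.
  by move/(_ erefl) => [/eqP]; rewrite nth_uniq // => /eqP /val_inj.
by exists (perm f_inj) => i; rewrite permE.
Qed.

Lemma matching_perm_uniq (s s' : 'S_(size D)) :
  (forall i : 'I_(size D), pairing s i \in t) ->
  (forall i : 'I_(size D), pairing s' i \in t) -> s = s'.
Proof.
move=> s_t s'_t; apply/permP => i; apply: matching_nth_inj.
by have [] := matching_fst_inj (s_t i) (s'_t i) erefl.
Qed.

Lemma matching_pairing (s : 'S_(size D)) l :
  (forall i : 'I_(size D), pairing s i \in t) -> l \in t ->
  exists i : 'I_(size D), l = pairing s i.
Proof.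
move=> s_t lt; have : l.1 \in D.
  by case/andP: t_matching => /perm_mem <- _; exact: map_f.
move=> lD; have ltD : index l.1 D < size D by rewrite index_mem.
by exists (Ordinal ltD); apply: (matching_fst_inj lt (s_t _)); rewrite /= nth_index.
Qed.

End Matching.

Lemma uniq_small_monos d : uniq (small_monos d).
Proof.
apply: allpairs_uniq; rewrite ?iota_uniq //; last by move=> [? ?] [? ?] _ _ [-> ->].
by apply: allpairs_uniq; rewrite ?iota_uniq // => [[? ?] [? ?] _ _ [-> ->]].
Qed.

Lemma uniq_downT d I : uniq (downT d I).
Proof. by rewrite sort_uniq filter_uniq ?uniq_small_monos. Qed.

Lemma uniq_upT d I : uniq (upT d I).
Proof. by rewrite sort_uniq filter_uniq ?uniq_small_monos. Qed.

Lemma tiling_matching d I tau :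
  is_tiling d I tau -> matching (downT d I) (upT d I) tau.
Proof.
case/and3P => /allP tau_in /allP count_fst /allP count_snd.
apply/andP; split; apply: count1_perm_map; rewrite ?uniq_downT ?uniq_upT //.
- by move=> l /tau_in /and3P[].
- by move=> b /count_fst /eqP.
- by move=> l /tau_in /and3P[].
- by move=> w /count_snd /eqP.
Qed.

Lemma msgn_matching d I t (s : 'S_(size (downT d I))) :
  matching (downT d I) (upT d I) t ->
  (forall i : 'I_(size (downT d I)),
     (nth mono0 (downT d I) i, nth mono0 (upT d I) (s i)) \in t) ->
  msgn d I t = ((-1) ^+ odd_perm s)%R.
Proof.
move=> t_matching s_t; rewrite /msgn; case: pickP => [s' /forallP s'_t|/(_ s)].
  by rewrite (matching_perm_uniq (uniq_downT d I) (uniq_upT d I) t_matching s'_t s_t).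
by move/negbT/forallP; case.
Qed.

Lemma perm_map_next (T : eqType) (s : seq T) : uniq s -> perm_eq (map (next s) s) s.
Proof.
move=> uniq_s; apply: uniq_perm => //.
  by rewrite (map_inj_uniq (can_inj (prev_next uniq_s))).
move=> x; apply/mapP/idP => [[y ys ->]|xs]; first by rewrite mem_next.
by exists (prev s x); rewrite ?mem_prev // next_prev.
Qed.

Lemma twistE tau sigma : uniq sigma ->
  twist tau sigma =
  [seq l <- tau | l \notin sigma] ++ [seq (l.1, (next sigma l).2) | l <- sigma].
Proof.
move=> uniq_sigma; congr (_ ++ _).
rewrite -[X in _ = map _ X](mkseq_nth (mono0, mono0)) /mkseq -map_comp.
by apply/eq_in_map => i; rewrite mem_iota /= => ilt; rewrite next_nth_mod.
Qed.

Section Twist.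

Variables (D U : seq mono) (tau sigma : seq (mono * mono)).
Hypotheses (uniq_D : uniq D) (uniq_U : uniq U) (tau_matching : matching D U tau).
Hypotheses (uniq_sigma : uniq sigma) (sigma_tau : {subset sigma <= tau}).

Lemma twist_matching : matching D U (twist tau sigma).
Proof.
have tau_perm : perm_eq tau ([seq l <- tau | l \notin sigma] ++ sigma).
  rewrite -(perm_filterC (mem sigma)) perm_catC perm_cat2l.
  apply: uniq_perm; rewrite ?filter_uniq ?(matching_uniq uniq_D tau_matching) // => l.
  by rewrite mem_filter; apply/andP/idP => [[]//|ls]; split=> //; exact: sigma_tau.
case/andP: tau_matching => fst_perm snd_perm; rewrite /matching twistE // !map_cat.
have -> : map fst [seq (l.1, (next sigma l).2) | l <- sigma] = map fst sigma.
  by rewrite -map_comp.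
have -> : map snd [seq (l.1, (next sigma l).2) | l <- sigma] =
          map snd (map (next sigma) sigma).
  by rewrite -!map_comp.
rewrite -!map_cat; apply/andP; split.
  by rewrite (perm_trans _ fst_perm) // perm_sym perm_map.
rewrite (perm_trans _ snd_perm) // perm_sym (perm_trans (perm_map _ tau_perm)) //.
by rewrite perm_map // perm_cat2l perm_sym perm_map_next.
Qed.

Variables (s s' : 'S_(size D)).
Hypothesis s_tau : forall i : 'I_(size D), (nth mono0 D i, nth mono0 U (s i)) \in tau.
Hypothesis s'_twist :
  forall i : 'I_(size D), (nth mono0 D i, nth mono0 U (s' i)) \in twist tau sigma.

Lemma twist_odd_perm : odd_perm s' = odd (size sigma).-1 (+) odd_perm s.
Proof.
pose pair (i : 'I_(size D)) := (nth mono0 D i, nth mono0 U (s i)).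
have pair_inj : injective pair by move=> i j [/eqP]; rewrite nth_uniq // => /eqP/val_inj.
have [ps _ sigmaE] : exists2 ps, all (mem (enum 'I_(size D))) ps & sigma = map pair ps.
  apply/subset_mapP => l /sigma_tau /(matching_pairing uniq_D tau_matching s_tau).
  by case=> i ->; rewrite map_f ?mem_enum.
have uniq_ps : uniq ps by rewrite -(map_inj_uniq pair_inj) -sigmaE.
have fst_inj := matching_fst_inj uniq_D twist_matching.
have s'_next x : s' x = s (next ps x).
  apply: (matching_nth_inj (x0 := mono0) uniq_U twist_matching).
  have [x_ps|xNps] := boolP (x \in ps).
    have next_pair : next sigma (pair x) = pair (next ps x) by rewrite sigmaE next_map.
    have : (nth mono0 D x, (pair (next ps x)).2) \in twist tau sigma.
      rewrite -next_pair twistE // mem_cat; apply/orP; right.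
      by apply/mapP; exists (pair x); rewrite // sigmaE map_f.
    by move/(fst_inj _ _ (s'_twist x))/(_ erefl) => -[].
  have : pair x \in twist tau sigma.
    by rewrite twistE // mem_cat mem_filter s_tau sigmaE (mem_map pair_inj) xNps.
  by move=> /(fst_inj _ _ (s'_twist x))/(_ erefl)[]; rewrite next_nth (negbTE xNps).
have -> : odd_perm s' = odd_perm (s' * s^-1)%g (+) odd_perm s.
  by rewrite odd_permM odd_permV -addbA addbb addbF.
rewrite (@odd_perm_next _ ps) ?sigmaE ?size_map // => x.
by rewrite permM s'_next permK.
Qed.

End Twist.

Theorem lemma4p1 (d : nat) (I : pred mono) (tau sigma : seq (mono * mono)) (n : nat) :
  monomial_ideal I ->
  is_tiling d I tau ->
  0 < n -> size sigma = n ->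
  is_cycle_in tau sigma ->
  msgn d I (twist tau sigma) = ((-1) ^+ n.-1 * msgn d I tau)%R.
Proof.
move=> _ /tiling_matching tau_m _ <- /and3P[uniq_sigma /allP sigma_tau _].
have [uD uU] := (uniq_downT d I, uniq_upT d I).
have twist_m := twist_matching uD tau_m uniq_sigma sigma_tau.
have [s s_tau] := matching_perm mono0 uD uU tau_m.
have [s' s'_twist] := matching_perm mono0 uD uU twist_m.
rewrite (msgn_matching tau_m s_tau) (msgn_matching twist_m s'_twist).
rewrite (twist_odd_perm uD uU tau_m uniq_sigma sigma_tau s_tau s'_twist).
by rewrite GRing.signr_addb GRing.signr_odd.
Qed.
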